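(* For a $T_0$ space $X$, $X$ is second-countable if and only if its Smyth power space $P_S(X)$ is second-countable.
   Context: The specialization order of $X$ is $x\le y$ iff $x\in\overline{\{y\}}$; saturated sets are upper sets in this order. $\mathsf{K}(X)$ is the set of nonempty compact saturated subsets of $X$. For open $U\subseteq X$, $\Box U=\{K\in\mathsf{K}(X):K\subseteq U\}$; the Smyth power space $P_S(X)$ is $\mathsf{K}(X)$ with the topology having base $\{\Box U: U\text{ open}\}$. *)

From Stdlib Require Import List.


Record topology (X : Type) := Topology {
  open : (X -> Prop) -> Prop;
  open_full : open (fun _ => True);
  open_inter : forall U V, open U -> open V -> open (fun x => U x /\ V x);
  open_union : forall F : (X -> Prop) -> Prop,
      (forall U, F U -> open U) -> open (fun x => exists U, F U /\ U x)
}.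

Arguments open {X} t _.
Arguments Topology {X}.

Section Defs.
Context {X : Type} (T : topology X).

Definition T0 : Prop :=
  forall x y, (forall U, open T U -> (U x <-> U y)) -> x = y.

Definition spec_le (x y : X) : Prop :=
  forall U, open T U -> U x -> U y.

Definition saturated (A : X -> Prop) : Prop :=
  forall x y, A x -> spec_le x y -> A y.

Definition compact (A : X -> Prop) : Prop :=
  forall F : (X -> Prop) -> Prop,
    (forall U, F U -> open T U) ->
    (forall x, A x -> exists U, F U /\ U x) ->
    exists l : list (X -> Prop),
      (forall U, In U l -> F U) /\ (forall x, A x -> exists U, In U l /\ U x).

Definition nonempty (A : X -> Prop) : Prop := exists x, A x.

Definition KX : Type :=
  { A : X -> Prop | nonempty A /\ compact A /\ saturated A }.

Definition box (U : X -> Prop) : KX -> Prop :=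
  fun K => forall x, proj1_sig K x -> U x.

(* open sets of the topology on K(X) with base { box U : U open } *)
Definition smyth_open (W : KX -> Prop) : Prop :=
  forall K, W K -> exists U, open T U /\ box U K /\ (forall K', box U K' -> W K').


End Defs.

Lemma smyth_open_full {X} (T : topology X) : smyth_open T (fun _ : KX T => True).
Proof. intros K _. exists (fun _ => True). repeat split; auto using open_full. Qed.

Lemma smyth_open_inter {X} (T : topology X) (U V : KX T -> Prop) :
  smyth_open T U -> smyth_open T V -> smyth_open T (fun K => U K /\ V K).
Proof.
  intros HU HV K [UK VK].
  destruct (HU K UK) as [A [oA [bA sA]]].
  destruct (HV K VK) as [B [oB [bB sB]]].
  exists (fun x => A x /\ B x). split; [apply open_inter; auto|split].
  - intros x Kx; split; auto.
  - intros K' bK'; split; [apply sA|apply sB]; intros x Kx; apply bK'; auto.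
Qed.

Lemma smyth_open_union {X} (T : topology X) (F : (KX T -> Prop) -> Prop) :
  (forall W, F W -> smyth_open T W) -> smyth_open T (fun K => exists W, F W /\ W K).
Proof.
  intros HF K [W [FW WK]].
  destruct (HF W FW K WK) as [A [oA [bA sA]]].
  exists A. repeat split; auto. intros K' bK'. exists W; auto.
Qed.

Definition smyth_topology {X} (T : topology X) : topology (KX T) :=
  @Topology (KX T) (smyth_open T) (smyth_open_full T) (@smyth_open_inter X T)
            (@smyth_open_union X T).

(* second countable: a countable base, enumerated by nat (repetitions allowed,
   so finite bases are included; the empty open set can pad) *)
Definition second_countable {X} (T : topology X) : Prop :=
  exists B : nat -> (X -> Prop),
    (forall n, open T (B n)) /\
    (forall U, open T U -> forall x, U x ->
       exists n, B n x /\ (forall y, B n y -> U y)).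

From Stdlib Require Import List Arith Bool.

(* Forward direction: a compact K inside an open U is covered by finitely many basic opens contained
   in U, so the boxes of the finite unions of basic opens form a countable base of P_S(X).
   Backward direction: x |-> up x embeds X into P_S(X) with box U pulling back to U, so the largest
   opens whose boxes lie in the basic opens of P_S(X) form a countable base of X. *)

(* Finite families of indices are coded by single natural numbers through their binary digits. *)
Lemma finite_indices_code {A : Type} (f : nat -> A) (P : nat -> Prop) (l : list A) :
  (forall a, In a l -> exists i, a = f i /\ P i) ->
  exists n, (forall i, Nat.testbit n i = true -> P i) /\
            (forall a, In a l -> exists i, Nat.testbit n i = true /\ a = f i).
Proof.
  induction l as [|a l IH]; intros Hl.
  - exists 0. split.
    + intros i; rewrite Nat.bits_0; discriminate.
    + intros a [].
  - destruct (Hl a (or_introl eq_refl)) as [j [-> Pj]].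
    destruct IH as [n [HnP Hnl]]; [intros b Hb; apply Hl; right; exact Hb|].
    exists (Nat.lor n (2 ^ j)). split.
    + intros i; rewrite Nat.lor_spec, Nat.pow2_bits_eqb, orb_true_iff, Nat.eqb_eq.
      intros [Hi| ->]; auto.
    + intros b [<-|Hb].
      * exists j. rewrite Nat.lor_spec, Nat.pow2_bits_eqb, Nat.eqb_refl, orb_true_r. auto.
      * destruct (Hnl b Hb) as [i [Hi ->]]. exists i.
        rewrite Nat.lor_spec, Hi. auto.
Qed.

Section SmythBase.
Context {X : Type} (T : topology X).

Definition is_base (B : nat -> X -> Prop) : Prop :=
  (forall n, open T (B n)) /\
  (forall U, open T U -> forall x, U x -> exists n, B n x /\ (forall y, B n y -> U y)).

(* Phrased as a union over a family of sets, the shape of [open_union], so no extensionality is needed. *)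
Definition base_union (B : nat -> X -> Prop) (n : nat) : X -> Prop :=
  fun x => exists W, (exists i, Nat.testbit n i = true /\ W = B i) /\ W x.

Lemma open_base_union B n : (forall i, open T (B i)) -> open T (base_union B n).
Proof. intros oB. apply open_union. intros W [i [_ ->]]. apply oB. Qed.

Lemma compact_sub_base_union B (K U : X -> Prop) :
  is_base B -> compact T K -> open T U -> (forall x, K x -> U x) ->
  exists n, (forall x, K x -> base_union B n x) /\ (forall x, base_union B n x -> U x).
Proof.
  intros [oB bB] cK oU KU.
  destruct (cK (fun W => exists i, W = B i /\ forall y, B i y -> U y)) as [l [Hl Hcov]].
  - intros W [i [-> _]]. apply oB.
  - intros x Kx. destruct (bB U oU x (KU x Kx)) as [i [Bx BU]]. eauto.
  - destruct (finite_indices_code B _ l Hl) as [n [HnU Hnl]].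
    exists n. split.
    + intros x Kx. destruct (Hcov x Kx) as [W [InW Wx]].
      destruct (Hnl W InW) as [i [Hi ->]]. exists (B i). split; [exists i|]; auto.
    + intros x [W [[i [Hi ->]] Bx]]. exact (HnU i Hi x Bx).
Qed.

Lemma open_box U : open T U -> smyth_open T (box T U).
Proof. intros oU K HK. exists U. auto. Qed.

(* The principal filter [up x], the least saturated set containing x; it is compact since every
   open set containing x contains all of it. *)
Definition up (x : X) : KX T.
Proof.
  exists (spec_le T x). split; [|split].
  - exists x. intros U _ Ux; exact Ux.
  - intros F oF cov. destruct (cov x (fun U _ Ux => Ux)) as [U [FU Ux]].
    exists (U :: nil). split.
    + intros V [<-|[]]; exact FU.
    + intros y Hy. exists U. split; [left; reflexivity|]. apply Hy; auto.
  - intros y z Hy Hz U oU Ux. apply Hz; [exact oU|]. apply Hy; auto.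
Defined.

Lemma box_up U x : open T U -> box T U (up x) <-> U x.
Proof.
  intros oU. split.
  - intros H. apply H. intros V _ Vx; exact Vx.
  - intros Ux y Hy. apply Hy; auto.
Qed.

Lemma box_subset_reflect (U V : X -> Prop) : open T U -> open T V ->
  (forall K, box T V K -> box T U K) -> forall x, V x -> U x.
Proof.
  intros oU oV H x Vx. apply (proj1 (box_up U x oU)), H, (proj2 (box_up V x oV)), Vx.
Qed.

Lemma smyth_second_countable : second_countable T -> second_countable (smyth_topology T).
Proof.
  intros [B HB]. pose proof (proj1 HB) as oB.
  exists (fun n => box T (base_union B n)). split.
  - intros n. apply open_box, open_base_union, oB.
  - intros W oW K WK. destruct (oW K WK) as [U [oU [KU UW]]].
    destruct (compact_sub_base_union B (proj1_sig K) U HB (proj1 (proj2 (proj2_sig K))) oU KU)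
      as [n [Kn nU]].
    exists n. split; [exact Kn|].
    intros K' HK'. apply UW. intros x K'x. apply nU, HK', K'x.
Qed.

Definition box_interior (C : KX T -> Prop) : X -> Prop :=
  fun x => exists U, (open T U /\ forall K, box T U K -> C K) /\ U x.

Lemma open_box_interior C : open T (box_interior C).
Proof. apply open_union. intros U [oU _]. exact oU. Qed.

Lemma box_interior_spec (C : KX T -> Prop) U :
  open T U -> (forall K, box T U K -> C K) -> forall x, U x -> box_interior C x.
Proof. intros oU UC x Ux. exists U. auto. Qed.

Lemma second_countable_of_smyth : second_countable (smyth_topology T) -> second_countable T.
Proof.
  intros [C [oC bC]].
  exists (fun n => box_interior (C n)). split.
  - intros n. apply open_box_interior.
  - intros U oU x Ux.
    destruct (bC (box T U) (open_box U oU) (up x) (proj2 (box_up U x oU) Ux)) as [n [Cx CU]].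
    exists n. split.
    + destruct (oC n (up x) Cx) as [V [oV [Vx VC]]].
      apply (box_interior_spec _ V oV VC), (proj1 (box_up V x oV)), Vx.
    + intros y [V [[oV VC] Vy]].
      exact (box_subset_reflect U V oU oV (fun K HK => CU K (VC K HK)) y Vy).
Qed.

End SmythBase.

Theorem mainTheorem5 (X : Type) (T : topology X) (hT0 : T0 T) :
  second_countable T <-> second_countable (smyth_topology T).
Proof.
  split.
  - apply smyth_second_countable.
  - apply second_countable_of_smyth.
Qed.
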